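(* Assume the standing hypotheses below. Let $T=R[\lambda]$ with a new indeterminate $\lambda$, and set $F_1=f(\lambda^4w,\lambda^3x,\lambda y,z)=\sum_i f^{(i,4d_1-i)}\lambda^i$, $G_1=g(\lambda^4w,\lambda^3x,\lambda y,z)=\sum_j g^{(j,4d_2-j)}\lambda^j$, and $\tilde F_1=F_1/\lambda^{i_{\min}}$, $\tilde G_1=G_1/\lambda^{j_{\min}}$. Then $$\sqrt{(\tilde F_1,\tilde G_1)T}=\sqrt{(\lambda,f_{\min},g_{\min})T}\cap\mathfrak pT.$$
   Context: Let $k$ be an algebraically closed field of characteristic zero, $R=k[w,x,y,z]$, and let $\mathfrak p\subseteq R$ be the homogeneous prime ideal of Macaulay's curve $C_4\subseteq\mathbb P^3_k$, the curve with parametrization $[s^4:s^3t:st^3:t^4]$. Endow $R$ with the bigrading $\deg w=(4,0)$, $\deg x=(3,1)$, $\deg y=(1,3)$, $\deg z=(0,4)$; $\mathfrak p$ is bihomogeneous. Standing hypothesis: $f,g\in\mathfrak p$ are homogeneous (in the usual grading) of degrees $d_1,d_2$ with $\sqrt{(f,g)R}=\mathfrak p$. Write $f=\sum_{i=i_{\min}}^{i_{\max}} f^{(i,4d_1-i)}$ and $g=\sum_{j=j_{\min}}^{j_{\max}} g^{(j,4d_2-j)}$ as sums of bihomogeneous components, where $f^{(i,4d_1-i)}$ is the component of bidegree $(i,4d_1-i)$ and $i_{\min},i_{\max},j_{\min},j_{\max}$ are chosen so that $f_{\min}:=f^{(i_{\min},4d_1-i_{\min})}$, $f_{\max}:=f^{(i_{\max},4d_1-i_{\max})}$,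 $g_{\min}:=g^{(j_{\min},4d_2-j_{\min})}$, $g_{\max}:=g^{(j_{\max},4d_2-j_{\max})}$ are all nonzero. *)

From HB Require Import structures.
From mathcomp Require Import all_boot all_order all_algebra.
Set Implicit Arguments. Unset Strict Implicit. Unset Printing Implicit Defensive.
Import Order.TTheory GRing.Theory.
Local Open Scope ring_scope.

(* R = k[w,x,y,z] as nested univariate polynomials: z is the outermost
   variable, then y, then x, and w is the innermost. *)
Definition R4 (k : fieldType) := {poly {poly {poly {poly k}}}}.

Definition varW {k : fieldType} : R4 k := ('X%:P%:P%:P).
Definition varX {k : fieldType} : R4 k := ('X%:P%:P).
Definition varY {k : fieldType} : R4 k := ('X%:P).
Definition varZ {k : fieldType} : R4 k := 'X.

Definition cst4 {k : fieldType} (c : k) : R4 k := c%:P%:P%:P%:P.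

Definition coef4 {k : fieldType} (f : R4 k) (a b c e : nat) : k :=
  (((f`_e)`_c)`_b)`_a.

Definition mono4 {k : fieldType} (a b c e : nat) : R4 k :=
  varW ^+ a * varX ^+ b * varY ^+ c * varZ ^+ e.

Definition sum_terms {k : fieldType} {A : nmodType} (f : R4 k)
  (F : nat -> nat -> nat -> nat -> k -> A) : A :=
  \sum_(e < size f) \sum_(c < size f`_e) \sum_(b < size (f`_e)`_c)
    \sum_(a < size ((f`_e)`_c)`_b) F a b c e (coef4 f a b c e).

Definition eval4 {k : fieldType} (f : R4 k) (pw px py pz : k) : k :=
  f.[pz%:P%:P%:P].[py%:P%:P].[px%:P].[pw].

Definition homog {k : fieldType} (d : nat) (f : R4 k) : Prop :=
  forall a b c e, coef4 f a b c e != 0 -> (a + b + c + e)%N = d.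

Definition pC4 {k : fieldType} (f : R4 k) : Prop :=
  forall s t : k, eval4 f (s ^+ 4) (s ^+ 3 * t) (s * t ^+ 3) (t ^+ 4) = 0.

(* bihomogeneous component of f of first bidegree i, where
   deg w = (4,0), deg x = (3,1), deg y = (1,3), deg z = (0,4).  For f
   homogeneous of degree d this is the component f^{(i,4d-i)}. *)
Definition bicomp {k : fieldType} (f : R4 k) (i : nat) : R4 k :=
  sum_terms f (fun a b c e co =>
    if (4 * a + 3 * b + c == i)%N then cst4 co * mono4 a b c e else 0).

Definition lamsub {k : fieldType} (f : R4 k) : {poly R4 k} :=
  sum_terms f (fun a b c e co =>
    (cst4 co * mono4 a b c e)%:P * 'X ^+ (4 * a + 3 * b + c)).

Definition ideal_span {A : comNzRingType} (P : A -> Prop) (h : A) : Prop :=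
  exists n (cf g : 'I_n -> A), (forall i, P (g i)) /\ h = \sum_(i < n) cf i * g i.

Definition ideal_gen {A : comNzRingType} (s : seq A) : A -> Prop :=
  ideal_span (fun q => q \in s).

Definition radical {A : comNzRingType} (I : A -> Prop) (h : A) : Prop :=
  exists n : nat, I (h ^+ n).

Definition ext_poly {A : comNzRingType} (I : A -> Prop) : {poly A} -> Prop :=
  ideal_span (fun q => exists r, I r /\ q = r%:P).

(* Write the substitution [(w,x,y,z) |-> (lambda^4 w, lambda^3 x, lambda y, z)] as a
   ring morphism [phi : A -> A[lambda]], [phi u = sum_i u_i lambda^i], which encodes the
   splitting of [u] into its bihomogeneous components [u_i]; then [F1~ = F1 / lambda^imin]
   is [f_min + lambda * (...)], and likewise for [G1~].
   - [(F1~, G1~)] lies in [(lambda, f_min, g_min)], and in [p T] because [p] is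
     bihomogeneous; as [p T] is radical, the left side is contained in the right one.
   - Conversely, each component [u_i] of [u] in [p] lies in [p = rad (f, g)], and
     [phi (u_i^m) = u_i^m lambda^(i m)] lies in [phi (f, g)], which is contained in
     [(F1~, G1~)]. Hence [p T] is contained in the radical of the saturation
     [(F1~, G1~) : lambda^oo]. An element of that radical which also lies in
     [rad (lambda T + (F1~, G1~)) = rad (lambda, f_min, g_min)] lies in [rad (F1~, G1~)].
   The ideal [p] is bihomogeneous because [k] is infinite, and [p T] is radical because it
   is the intersection of the kernels of the evaluations [T -> k[lambda]] at points of the
   curve. *)

From HB Require Import structures.
From mathcomp Require Import all_boot all_order all_algebra.
From mathcomp Require Import ring zify.
Import GRing.Theory.
Local Open Scope ring_scope.
Set Implicit Arguments. Unset Strict Implicit.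

Section Ideals.
Variable A : comNzRingType.
Implicit Types (I P : A -> Prop) (x y h : A).

Definition is_ideal I :=
  [/\ I 0, forall x y, I x -> I y -> I (x + y) & forall c x, I x -> I (c * x)].

Lemma ideal_sum I n (F : 'I_n -> A) :
  is_ideal I -> (forall i, I (F i)) -> I (\sum_(i < n) F i).
Proof. by case=> I0 ID _ FI; apply: (big_ind I). Qed.

Lemma ideal_span_ideal P : is_ideal (ideal_span P).
Proof.
split.
- by exists 0%N, (fun _ => 0), (fun _ => 0); split; [case | rewrite big_ord0].
- move=> _ _ [n [cf [g [Pg ->]]]] [m [cf' [g' [Pg' ->]]]].
  exists (n + m)%N, (fun i => match split i with inl j => cf j | inr j => cf' j end),
    (fun i => match split i with inl j => g j | inr j => g' j end).
  split; first by move=> i; case: (split i).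
  rewrite big_split_ord; congr (_ + _); apply: eq_bigr => i _.
    by rewrite (unsplitK (inl i)).
  by rewrite (unsplitK (inr i)).
- move=> c _ [n [cf [g [Pg ->]]]]; exists n, (fun i => c * cf i), g.
  by split=> //; rewrite mulr_sumr; apply: eq_bigr => i _; rewrite mulrA.
Qed.

Lemma mem_ideal_span P x : P x -> ideal_span P x.
Proof.
by move=> Px; exists 1%N, (fun _ => 1), (fun _ => x); split; rewrite ?big_ord1 ?mul1r.
Qed.

Lemma ideal_span_min P I : is_ideal I -> (forall x, P x -> I x) ->
  forall x, ideal_span P x -> I x.
Proof.
move=> [I0 ID IM] PI _ [n [cf [g [Pg ->]]]].
by apply: ideal_sum => // i; apply: IM; apply: PI.
Qed.

Lemma radical_mull I c x : is_ideal I -> radical I x -> radical I (c * x).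
Proof. by move=> [_ _ IM] [n Hn]; exists n; rewrite exprMn; apply: IM. Qed.

Lemma radical_add I x y : is_ideal I -> radical I x -> radical I y -> radical I (x + y).
Proof.
move=> [I0 ID IM] [m Hm] [n Hn]; exists (m + n)%N; rewrite exprDn.
apply: ideal_sum => // i; have [le_ni | lt_in] := leqP n i.
  by rewrite -{2}(subnK le_ni) exprD mulrA -mulrnAl; apply: IM.
rewrite (_ : (m + n - i)%N = (n - i + m)%N); last by lia.
by rewrite exprD mulrAC -mulrnAl; apply: IM.
Qed.

Lemma radical_sum I n (F : 'I_n -> A) : is_ideal I ->
  (forall i, radical I (F i)) -> radical I (\sum_(i < n) F i).
Proof.
move=> Iid FI; apply: (big_ind (radical I)) => //; last by move=> u v; apply: radical_add.
by exists 1%N; rewrite expr1; case: Iid.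
Qed.

Definition saturation I x y := exists n, I (x ^+ n * y).

Lemma saturation_ideal I x : is_ideal I -> is_ideal (saturation I x).
Proof.
move=> [I0 ID IM]; split.
- by exists 0%N; rewrite mulr0.
- move=> y z [m Hm] [n Hn]; exists (m + n)%N; rewrite mulrDr exprD.
  by apply: ID; [rewrite mulrAC mulrC | rewrite -mulrA]; apply: IM.
- by move=> c y [n Hn]; exists n; rewrite mulrCA; apply: IM.
Qed.

Definition addl_principal x I y := exists a z, I z /\ y = x * a + z.

Lemma addl_principal_ideal x I : is_ideal I -> is_ideal (addl_principal x I).
Proof.
move=> [I0 ID IM]; split.
- by exists 0, 0; rewrite mulr0 addr0.
- move=> _ _ [a [z [Iz ->]]] [b [w [Iw ->]]]; exists (a + b), (z + w).
  by split; [apply: ID | rewrite mulrDr addrACA].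
- move=> c _ [a [z [Iz ->]]]; exists (c * a), (c * z).
  by split; [apply: IM | rewrite mulrDr mulrCA].
Qed.

Lemma exprD_mulr x y n : exists z, (x + y) ^+ n = x ^+ n + y * z.
Proof.
elim: n => [|n [z IH]]; first by exists 0; rewrite !expr0 mulr0 addr0.
by exists (x ^+ n + (x + y) * z); rewrite exprS IH exprS; ring.
Qed.

Lemma radical_saturation_addl I x h : is_ideal I ->
  radical (saturation I x) h -> radical (addl_principal x I) h -> radical I h.
Proof.
move=> [I0 ID IM] [m [n Hn]] [N [a [z [Iz EN]]]].
have [w Ew] := exprD_mulr (x * a) z n.
exists (N * n + m)%N; rewrite exprD exprM EN Ew mulrDl.
apply: ID; first by rewrite exprMn -mulrA mulrCA; apply: IM.
by rewrite -mulrA mulrC; apply: IM.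
Qed.

End Ideals.

Lemma poly_expand (A : nzRingType) (p : {poly A}) :
  p = \sum_(i < size p) (p`_i)%:P * 'X^i.
Proof.
by rewrite -[LHS]coefK poly_def; apply: eq_bigr => i _; rewrite mul_polyC.
Qed.

Lemma poly_coef0_addX (A : nzRingType) (p : {poly A}) :
  p = (p`_0)%:P + 'X * drop_poly 1 p.
Proof.
apply/polyP => -[|i]; rewrite coefD coefC coefXM coef_drop_poly ?addn1 /=.
  by rewrite addr0.
by rewrite add0r.
Qed.

Lemma coefCXn (A : nzSemiRingType) (c : A) n i :
  (c%:P * 'X^n)`_i = if n == i then c else 0.
Proof. by rewrite coefCM coefXn mulr_natr mulrb eq_sym. Qed.

Lemma divXnK (A : idomainType) (p : {poly A}) m :
  (forall i, p`_i != 0 -> (m <= i)%N) -> p %/ 'X^m * 'X^m = p.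
Proof.
move=> low; rewrite -Pdiv.IdomainMonic.drop_poly_divp -[RHS](poly_take_drop m).
suff -> : take_poly m p = 0 by rewrite add0r.
apply/polyP => i; rewrite coef_take_poly coef0; case: ifP => // lt_im.
by apply/eqP; apply: contraLR lt_im; rewrite -leqNgt; apply: low.
Qed.

Lemma coef_divXn (A : idomainType) (p : {poly A}) m i :
  (p %/ 'X^m)`_i = p`_(i + m).
Proof. by rewrite -Pdiv.IdomainMonic.drop_poly_divp coef_drop_poly. Qed.

Lemma divXn_lowest (A : idomainType) (p : {poly A}) m :
  p %/ 'X^m = (p`_m)%:P + 'X * drop_poly 1 (p %/ 'X^m).
Proof. by rewrite {1}[p %/ _]poly_coef0_addX coef_divXn. Qed.

Section CoefIdeal.
Variables (A : comNzRingType) (P : A -> Prop).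
Hypothesis P_ideal : is_ideal P.

Definition coef_ideal (p : {poly A}) := forall i, P p`_i.

Lemma coef_ideal_ideal : is_ideal coef_ideal.
Proof.
have [P0 PD PM] := P_ideal; split.
- by move=> i; rewrite coef0.
- by move=> p q Pp Pq i; rewrite coefD; apply: PD.
- move=> c p Pp i; rewrite coefM; apply: ideal_sum => // j; exact: PM.
Qed.

Lemma ext_polyE p : ext_poly P p <-> coef_ideal p.
Proof.
split.
- apply: ideal_span_min; first exact: coef_ideal_ideal.
  move=> _ [r [Pr ->]] i; rewrite coefC; case: eqP => _ //; by case: P_ideal.
- move=> Pp; exists (size p), (fun i => 'X^i), (fun i => (p`_i)%:P); split.
    by move=> i; exists p`_i.
  by rewrite {1}(poly_expand p); apply: eq_bigr => i _; rewrite mulrC.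
Qed.

End CoefIdeal.

Section GradedRadical.
Variables (A : idomainType) (phi : A -> {poly A}) (P : A -> Prop).
Local Notation T := {poly A}.

(* [phi] is a ring morphism encoding a grading of [A] as [u |-> sum_i u_i lambda^i];
   [P] is a homogeneous ideal whose extension [P T] is radical. *)
Hypotheses (phiD : {morph phi : x y / x + y}) (phiM : {morph phi : x y / x * y})
  (phi1 : phi 1 = 1)
  (phi_homog : forall u i, phi (phi u)`_i = ((phi u)`_i)%:P * 'X^i)
  (phi_at1 : forall u, (phi u).[1] = u)
  (P_ideal : is_ideal P)
  (P_homog : forall u i, P u -> P (phi u)`_i)
  (P_ext_radical : forall (h : T) n, coef_ideal P (h ^+ n) -> coef_ideal P h).

Variables (f g : A) (imin jmin : nat).
Hypotheses (fP : P f) (gP : P g)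
  (P_radical_fg : forall u, P u -> radical (ideal_gen [:: f; g]) u)
  (fmin_le : forall i, (phi f)`_i != 0 -> (imin <= i)%N)
  (gmin_le : forall j, (phi g)`_j != 0 -> (jmin <= j)%N).

Let phi0 : phi 0 = 0.
Proof. by apply: (addrI (phi 0)); rewrite -phiD !addr0. Qed.

Let phiXn x n : phi (x ^+ n) = phi x ^+ n.
Proof. by elim: n => [|n IHn]; rewrite ?expr0 // !exprS phiM IHn. Qed.

Let Ft := phi f %/ 'X^imin.
Let Gt := phi g %/ 'X^jmin.
Let J := ideal_gen [:: Ft; Gt].
Let K := ideal_gen [:: 'X; ((phi f)`_imin)%:P; ((phi g)`_jmin)%:P].

Let J_ideal : is_ideal J. Proof. exact: ideal_span_ideal. Qed.
Let K_ideal : is_ideal K. Proof. exact: ideal_span_ideal. Qed.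

Lemma J_sub_K p : J p -> K p.
Proof.
have [K0 KD KM] := K_ideal.
have KX q : K ('X * q) by rewrite mulrC; apply/KM/mem_ideal_span; rewrite inE eqxx.
apply: ideal_span_min => // q; rewrite !inE => /orP[] /eqP ->;
  rewrite /Ft /Gt divXn_lowest; apply: KD; try exact: KX;
  by apply: mem_ideal_span; rewrite !inE eqxx ?orbT.
Qed.

Lemma J_sub_ext p : J p -> coef_ideal P p.
Proof.
apply: ideal_span_min; first exact: coef_ideal_ideal.
by move=> q; rewrite !inE => /orP[] /eqP -> i; rewrite coef_divXn; apply: P_homog.
Qed.

Lemma K_sub_addlX p : K p -> addl_principal 'X J p.
Proof.
apply: ideal_span_min; first exact: addl_principal_ideal.
have mem_J q : q \in [:: Ft; Gt] -> J q by move=> ?; apply: mem_ideal_span.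
move=> q; rewrite !inE => /orP[/eqP ->|/orP[] /eqP ->].
- by exists 1, 0; rewrite mulr1 addr0; case: J_ideal.
- exists (- drop_poly 1 Ft), Ft; split; first by apply: mem_J; rewrite !inE eqxx.
  by rewrite {2}/Ft divXn_lowest mulrN addrC addrK.
- exists (- drop_poly 1 Gt), Gt; split; first by apply: mem_J; rewrite !inE eqxx orbT.
  by rewrite {2}/Gt divXn_lowest mulrN addrC addrK.
Qed.

Lemma phi_ideal_gen u : ideal_gen [:: f; g] u -> J (phi u).
Proof.
have [J0 JD JM] := J_ideal.
apply: (@ideal_span_min _ _ (fun u => J (phi u))).
- split; first by rewrite phi0.
  + by move=> x y Jx Jy; rewrite phiD; apply: JD.
  + by move=> c x Jx; rewrite phiM; apply: JM.
- move=> x; rewrite !inE => /orP[] /eqP ->.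
  + rewrite -(divXnK fmin_le) mulrC; apply/JM/mem_ideal_span.
    by rewrite !inE eqxx.
  + rewrite -(divXnK gmin_le) mulrC; apply/JM/mem_ideal_span.
    by rewrite !inE eqxx orbT.
Qed.

Lemma radical_saturationC u : P u -> radical (saturation J 'X) u%:P.
Proof.
move=> Pu; have Xsat_ideal := saturation_ideal 'X J_ideal.
rewrite -[u]phi_at1 horner_coef rmorph_sum; apply: radical_sum => // i.
rewrite expr1n mulr1; have [m Hm] := P_radical_fg (P_homog i Pu).
exists m, (i * m)%N; move: (phi_ideal_gen Hm).
by rewrite phiXn phi_homog exprMn -exprM mulrC.
Qed.

Lemma radical_saturation_ext h : coef_ideal P h -> radical (saturation J 'X) h.
Proof.
move=> Ph; have Xsat_ideal := saturation_ideal 'X J_ideal.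
rewrite (poly_expand h); apply: radical_sum => // i.
by rewrite mulrC; apply: radical_mull => //; apply: radical_saturationC.
Qed.

Theorem radical_lowest_terms h :
  radical J h <-> radical K h /\ ext_poly P h.
Proof.
rewrite ext_polyE //; split.
- move=> [n Jhn]; split; first by exists n; apply: J_sub_K.
  exact/(P_ext_radical (n := n))/J_sub_ext.
- move=> [[N KhN] Ph]; apply: radical_saturation_addl => //.
    exact: radical_saturation_ext.
  by exists N; apply: K_sub_addlX.
Qed.

End GradedRadical.

Lemma pchar0_natr_inj (F : fieldType) : [pchar F] =i pred0 ->
  injective (fun n : nat => n%:R : F).
Proof.
move=> /pcharf0P ch0.
suff natr_neq m n : (m < n)%N -> n%:R != m%:R :> F.
  move=> m n /= eq_mn.
  by case: (ltngtP m n) => // lt; have := natr_neq _ _ lt; rewrite eq_mn eqxx.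
move=> lt; rewrite -subr_eq0 -natrB; last exact: ltnW.
by rewrite ch0 subn_eq0 -ltnNge.
Qed.

Lemma pchar0_poly_eq0 (F : fieldType) (Q : {poly F}) : [pchar F] =i pred0 ->
  (forall x, Q.[x] = 0) -> Q = 0.
Proof.
move=> ch0 Q0; apply/eqP; apply: contraT => nzQ.
pose xs := [seq (i%:R : F) | i <- iota 0 (size Q)].
have Qxs : all (root Q) xs by apply/allP => _ /mapP[i _ ->]; rewrite /root Q0.
have uniq_xs : uniq xs.
  by rewrite map_inj_uniq ?iota_uniq //; exact: pchar0_natr_inj.
by have := max_poly_roots nzQ Qxs uniq_xs; rewrite size_map size_iota ltnn.
Qed.

(* Stated with an explicit commutativity hypothesis: inferring the commutative ring
   structure of the nested polynomial ring [(R4 k)[lambda]] is very slow. *)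
Lemma mulr_shuffle (B : nzSemiRingType) (mulBC : commutative (@GRing.mul B))
  (co p q r w x y z : B) :
  co * (p * w * (q * x) * (r * y) * z) = co * (w * x * y * z) * (p * q * r).
Proof.
have mulBCA (u v t : B) : u * (v * t) = v * (u * t) by rewrite !mulrA (mulBC u).
have mulBACA (u v s t : B) : u * v * (s * t) = u * s * (v * t).
  by rewrite -!mulrA (mulBCA v).
by rewrite (mulBACA p) (mulBACA (p * q)) -(mulrA (p * q * r)) (mulBC (p * q * r)) mulrA.
Qed.

Section Substitution.
Variable k : fieldType.
Local Notation R := (R4 k).
Local Notation T := {poly R}.
Implicit Types (u : R).

Lemma eq_sum_terms (V : nmodType) u (F G : nat -> nat -> nat -> nat -> k -> V) :
  (forall a b c e co, F a b c e co = G a b c e co) -> sum_terms u F = sum_terms u G.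
Proof.
move=> FG; do 4 (apply: eq_bigr => ? _); exact: FG.
Qed.

Lemma sum_terms_morph (V W : nmodType) (h : V -> W) u
    (F : nat -> nat -> nat -> nat -> k -> V) :
  h 0 = 0 -> {morph h : x y / x + y} ->
  h (sum_terms u F) = sum_terms u (fun a b c e co => h (F a b c e co)).
Proof.
move=> h0 hD; rewrite /sum_terms (big_morph h hD h0); apply: eq_bigr => e _.
rewrite (big_morph h hD h0); apply: eq_bigr => c _.
by rewrite (big_morph h hD h0); apply: eq_bigr => b _; rewrite (big_morph h hD h0).
Qed.

Lemma poly4_expand u : u = sum_terms u (fun a b c e co => cst4 co * mono4 a b c e).
Proof.
rewrite /sum_terms {1}(poly_expand u); apply: eq_bigr => e _.
transitivity ((\sum_(c < size u`_e) (u`_e`_c)%:P * 'X^c)%:P * 'X^e);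
  first by rewrite -poly_expand.
rewrite rmorph_sum mulr_suml; apply: eq_bigr => c _.
transitivity (((\sum_(b < size u`_e`_c) (u`_e`_c`_b)%:P * 'X^b)%:P * 'X^c)%:P * 'X^e);
  first by rewrite -poly_expand.
rewrite rmorph_sum mulr_suml rmorph_sum mulr_suml; apply: eq_bigr => b _.
transitivity ((((\sum_(a < size u`_e`_c`_b) (u`_e`_c`_b`_a)%:P * 'X^a)%:P * 'X^b)%:P
  * 'X^c)%:P * 'X^e); first by rewrite -poly_expand.
rewrite rmorph_sum mulr_suml rmorph_sum mulr_suml rmorph_sum mulr_suml.
apply: eq_bigr => a _.
rewrite /cst4 /mono4 /coef4 /varW /varX /varY /varZ !rmorphM !rmorphXn.
by rewrite [in RHS]mulrA [in RHS]mulrA [in RHS]mulrA.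
Qed.

Let mulTC (x y : T) : x * y = y * x := mulrC x y.

Definition cstT : {rmorphism k -> T} :=
  (@polyC R \o @polyC {poly {poly {poly k}}} \o @polyC {poly {poly k}}
   \o @polyC {poly k} \o @polyC k)%FUN.

Definition lam_w : {rmorphism {poly k} -> T} :=
  horner_morph (fun c => mulTC ('X^4 * varW%:P) (cstT c)).
Definition lam_wx : {rmorphism {poly {poly k}} -> T} :=
  horner_morph (fun c => mulTC ('X^3 * varX%:P) (lam_w c)).
Definition lam_wxy : {rmorphism {poly {poly {poly k}}} -> T} :=
  horner_morph (fun c => mulTC ('X * varY%:P) (lam_wx c)).
Definition lam : {rmorphism R -> T} :=
  horner_morph (fun c => mulTC varZ%:P (lam_wxy c)).

Lemma lam_cst c : lam (cst4 c) = (cst4 c)%:P.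
Proof.
rewrite /cst4 [lam _]horner_morphC [lam_wxy _]horner_morphC [lam_wx _]horner_morphC.
by rewrite [lam_w _]horner_morphC.
Qed.

Lemma lam_vars :
  [/\ lam varW = 'X^4 * varW%:P, lam varX = 'X^3 * varX%:P,
      lam varY = 'X * varY%:P & lam varZ = varZ%:P].
Proof.
split; first by rewrite [lam _]horner_morphC [lam_wxy _]horner_morphC
  [lam_wx _]horner_morphC [lam_w _]horner_morphX.
- by rewrite [lam _]horner_morphC [lam_wxy _]horner_morphC [lam_wx _]horner_morphX.
- by rewrite [lam _]horner_morphC [lam_wxy _]horner_morphX.
- by rewrite [lam _]horner_morphX.
Qed.

Lemma lam_term co a b c e :
  lam (cst4 co * mono4 a b c e) = (cst4 co * mono4 a b c e)%:P * 'X^(4 * a + 3 * b + c).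
Proof.
have [lW lX lY lZ] := lam_vars.
rewrite /mono4 !rmorphM !rmorphXn lam_cst lW lX lY lZ.
rewrite (exprMn_comm a (mulTC ('X^4) varW%:P)) (exprMn_comm b (mulTC ('X^3) varX%:P)).
rewrite (exprMn_comm c (mulTC 'X varY%:P)).
rewrite (exprD _ (4 * a + 3 * b)) (exprD _ (4 * a)) !exprM.
exact: (mulr_shuffle mulTC).
Qed.

Lemma lamsubE u : lamsub u = lam u.
Proof.
rewrite {2}(poly4_expand u) (sum_terms_morph _ _ (rmorph0 lam) (rmorphD lam)).
by apply: eq_sum_terms => a b c e co; rewrite lam_term.
Qed.

Lemma lamsubD : {morph @lamsub k : x y / x + y}.
Proof. by move=> x y; rewrite !lamsubE rmorphD. Qed.

Lemma lamsubM : {morph @lamsub k : x y / x * y}.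
Proof. by move=> x y; rewrite !lamsubE rmorphM. Qed.

Lemma lamsub1 : lamsub (1 : R) = 1.
Proof. by rewrite lamsubE rmorph1. Qed.

Lemma coef_lamsub u i : (lamsub u)`_i = bicomp u i.
Proof.
rewrite /lamsub (sum_terms_morph _ _ (coef0 _ i) (fun p q => coefD p q i)).
by apply: eq_sum_terms => a b c e co; rewrite coefCXn.
Qed.

Lemma lamsub_bicomp u i : lamsub (bicomp u i) = (bicomp u i)%:P * 'X^i.
Proof.
have mulXi0 : (0 : R)%:P * 'X^i = 0 by rewrite polyC0 mul0r.
have mulXiD (x y : R) : (x + y)%:P * 'X^i = x%:P * 'X^i + y%:P * 'X^i.
  by rewrite polyCD mulrDl.
rewrite lamsubE (sum_terms_morph _ _ (rmorph0 lam) (rmorphD lam)).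
rewrite (sum_terms_morph (h := fun r : R => r%:P * 'X^i) _ _ mulXi0 mulXiD).
apply: eq_sum_terms => a b c e co; case: eqP => [<-|_]; first exact: lam_term.
by rewrite rmorph0 polyC0 mul0r.
Qed.

Lemma lamsub_homog u i : lamsub (lamsub u)`_i = ((lamsub u)`_i)%:P * 'X^i.
Proof. by rewrite coef_lamsub lamsub_bicomp. Qed.

Lemma lamsub_at1 u : (lamsub u).[1] = u.
Proof.
rewrite /lamsub (sum_terms_morph _ _ (horner0 1) (fun p q => hornerD p q 1)).
rewrite {2}(poly4_expand u); apply: eq_sum_terms => a b c e co.
by rewrite hornerCM hornerXn expr1n mulr1.
Qed.

End Substitution.

Section Curve.
Variable k : fieldType.
Local Notation R := (R4 k).
Implicit Types (u : R).

Definition eval_curve (s t : k) : {rmorphism R -> k} :=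
  (horner_eval (s ^+ 4) \o horner_eval ((s ^+ 3 * t)%:P) \o
   horner_eval ((s * t ^+ 3)%:P%:P) \o horner_eval ((t ^+ 4)%:P%:P%:P))%FUN.

Lemma eval4_curve u s t :
  eval4 u (s ^+ 4) (s ^+ 3 * t) (s * t ^+ 3) (t ^+ 4) = eval_curve s t u.
Proof. by []. Qed.

Lemma eval_curve_term s t co a b c e :
  eval_curve s t (cst4 co * mono4 a b c e) =
  co * (s ^+ (4 * a + 3 * b + c) * t ^+ (b + 3 * c + 4 * e)).
Proof.
rewrite /mono4 !rmorphM !rmorphXn /= /cst4 /varW /varX /varY /varZ /horner_eval.
rewrite !(hornerC, hornerX).
rewrite (exprD _ (4 * a + 3 * b)) (exprD _ (4 * a)) (exprD _ (b + 3 * c)) (exprD _ b).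
by rewrite !exprM !exprMn; ring.
Qed.

Lemma pC4_ideal : is_ideal (@pC4 k).
Proof.
split.
- by move=> s t; rewrite eval4_curve rmorph0.
- move=> x y Hx Hy s t; move: (Hx s t) (Hy s t).
  by rewrite !eval4_curve rmorphD => -> ->; rewrite addr0.
- by move=> c x Hx s t; move: (Hx s t); rewrite !eval4_curve rmorphM => ->; rewrite mulr0.
Qed.

(* The extension of the ideal of the curve to [R[lambda]] is radical, since it
   is the kernel of the coefficientwise evaluations into the domain [k[lambda]]. *)
Lemma pC4_ext_radical (h : {poly R}) n :
  coef_ideal (@pC4 k) (h ^+ n) -> coef_ideal (@pC4 k) h.
Proof.
move=> hn i s t.
have : map_poly (eval_curve s t) (h ^+ n) = 0.
  by apply/polyP => j; rewrite coef_map coef0; exact: hn.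
rewrite rmorphXn => /eqP; rewrite expf_eq0 => /andP[_ /eqP /(congr1 (coefp i))].
by rewrite /= coef_map coef0 eval4_curve.
Qed.

(* For fixed [t], [Q(s) = u(s^4, s^3 t, s t^3, t^4)] is a polynomial in [s] vanishing on
   the infinite field [k], and [Q_i s^i] is the value of [u^(i, _)] at the same point. *)
Lemma pC4_bicomp u i : [pchar k] =i pred0 -> pC4 u -> pC4 (bicomp u i).
Proof.
move=> ch0 Pu s t.
pose Q : {poly k} := sum_terms u (fun a b c e co =>
  (co * t ^+ (b + 3 * c + 4 * e))%:P * 'X^(4 * a + 3 * b + c)).
have Q_eval x : Q.[x] = eval_curve x t u.
  rewrite [in RHS](poly4_expand u) /Q.
  rewrite (sum_terms_morph _ _ (horner0 x) (fun p q => hornerD p q x)).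
  rewrite (sum_terms_morph _ _ (rmorph0 _) (rmorphD (eval_curve x t))).
  apply: eq_sum_terms => a b c e co.
  by rewrite hornerCM hornerXn eval_curve_term -mulrA (mulrC (t ^+ _)).
have Q0 : Q = 0.
  by apply: pchar0_poly_eq0 => // x; rewrite Q_eval -eval4_curve; exact: Pu.
rewrite eval4_curve (sum_terms_morph _ _ (rmorph0 _) (rmorphD (eval_curve s t))).
transitivity (s ^+ i * Q`_i); last by rewrite Q0 coef0 mulr0.
rewrite /Q (sum_terms_morph _ _ (coef0 _ i) (fun p q => coefD p q i)).
rewrite (sum_terms_morph (h := fun y : k => s ^+ i * y) _ _ (mulr0 _) (mulrDr _)).
apply: eq_sum_terms => a b c e co; rewrite coefCXn.
case: eqP => [<-|_]; last by rewrite rmorph0 mulr0.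
by rewrite eval_curve_term mulrCA.
Qed.

Lemma pC4_homog u i : [pchar k] =i pred0 -> pC4 u -> pC4 (lamsub u)`_i.
Proof. by rewrite coef_lamsub; exact: pC4_bicomp. Qed.

End Curve.

Unset Implicit Arguments.

Theorem mainTheorem4 (k : closedFieldType) (char0 : [pchar k] =i pred0)
  (f g : R4 k) (d1 d2 : nat)
  (hf : homog d1 f) (hg : homog d2 g)
  (fp : pC4 f) (gp : pC4 g)
  (hrad : forall h : R4 k, radical (ideal_gen [:: f; g]) h <-> pC4 h)
  (imin jmin : nat)
  (himin : bicomp f imin != 0)
  (himin_le : forall i, bicomp f i != 0 -> (imin <= i)%N)
  (hjmin : bicomp g jmin != 0)
  (hjmin_le : forall j, bicomp g j != 0 -> (jmin <= j)%N) :
  let F1t := lamsub f %/ 'X ^+ imin in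
  let G1t := lamsub g %/ 'X ^+ jmin in
  forall h : {poly R4 k},
    radical (ideal_gen [:: F1t; G1t]) h <->
    (radical (ideal_gen [:: 'X; (bicomp f imin)%:P; (bicomp g jmin)%:P]) h
     /\ ext_poly pC4 h).
Proof.
rewrite -!coef_lamsub.
have fmin_le i : (lamsub f)`_i != 0 -> (imin <= i)%N by rewrite coef_lamsub; exact: himin_le.
have gmin_le j : (lamsub g)`_j != 0 -> (jmin <= j)%N by rewrite coef_lamsub; exact: hjmin_le.
exact: (radical_lowest_terms (@lamsubD k) (@lamsubM k) (@lamsub1 k) (@lamsub_homog k)
  (@lamsub_at1 k) (@pC4_ideal k) (fun u i => @pC4_homog k u i char0)
  (@pC4_ext_radical k) fp gp (fun u => (hrad u).2) fmin_le gmin_le).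
Qed.
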